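(* Let $m,k\ge 1$, let $a,b>0$ and $z$ an integer with $0<z<k$, and let $p_*$ be the probability that a uniformly random $y\in\{0,1\}^k$ lies in the optimal region $\bar{X}_*=\{y\in\{0,1\}^k: f_{gen\_trap(k)}(y)>a\}$. Let $c>0$ be a constant ($c=\Omega(1)$). If a population of $\mu=\frac{c}{p_*}m$ bitstrings of length $mk$ is drawn independently and uniformly at random (each split into $m$ consecutive blocks of length $k$), then the probability that for every $i\in\{1,\dots,m\}$ at least one individual has its $i$-th block in $\bar{X}_*$ is at least $1-\epsilon$ with $\epsilon=me^{-cm}$, exponentially small in $m$.
   Context: Generalized trap function: for $y\in\{0,1\}^k$ with $u(y)$ ones, $f_{gen\_trap(k)}(y)=\frac{a}{z}(z-u(y))$ if $u(y)\le z$ and $f_{gen\_trap(k)}(y)=\frac{b}{k-z}(u(y)-z)$ otherwise. Equivalently $p_*=\Pr\big(\mathrm{Bin}(k,1/2)\ge \lceil a(k-z)/b\rceil+z\big)$. *)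

From HB Require Import structures.
From mathcomp Require Import all_boot all_order all_algebra.
From mathcomp Require Import reals.
From mathcomp.analysis Require Import sequences exp.
Set Implicit Arguments. Unset Strict Implicit. Unset Printing Implicit Defensive.
Import Order.TTheory GRing.Theory Num.Theory.
Local Open Scope ring_scope.

Definition ones (k : nat) (y : {ffun 'I_k -> bool}) : nat := #|[set j | y j]|.

Definition gen_trap (R : realType) (a b : R) (z k : nat)
    (y : {ffun 'I_k -> bool}) : R :=
  let u := ones y in
  if (u <= z)%N then a / z%:R * (z%:R - u%:R)
  else b / (k - z)%:R * (u%:R - z%:R).

Definition opt_region (R : realType) (a b : R) (z k : nat) :
    {set {ffun 'I_k -> bool}} :=
  [set y | a < gen_trap a b z y].

Definition p_star (R : realType) (a b : R) (z k : nat) : R :=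
  #|opt_region a b z k|%:R / #|{ffun 'I_k -> bool}|%:R.

Definition block (m k : nat) (x : (m * k).-tuple bool) (i : 'I_m) :
    {ffun 'I_k -> bool} :=
  [ffun j : 'I_k => nth false x (i * k + j)].

Definition population (mu m k : nat) := {ffun 'I_mu -> (m * k).-tuple bool}.

Definition all_blocks_covered (R : realType) (a b : R) (z mu m k : nat) :
    {set population mu m k} :=
  [set P : population mu m k |
     [forall i : 'I_m, [exists p : 'I_mu, block (P p) i \in opt_region a b z k]]].

(* probability under the uniform distribution on populations
   (= mu independent uniform bitstrings) *)
Definition unif_prob (R : realType) (T : finType) (E : {set T}) : R :=
  #|E|%:R / #|T|%:R.

From HB Require Import structures.
From mathcomp Require Import all_boot all_order all_algebra.
From mathcomp Require Import reals.
From mathcomp.analysis Require Import sequences exp.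
Import Order.TTheory GRing.Theory Num.Theory.
Set Implicit Arguments. Unset Strict Implicit. Unset Printing Implicit Defensive.
Local Open Scope ring_scope.

(* Every block of a uniform bitstring is itself uniform, since xoring a fixed
   pattern into one block is a bijection between the fibres of that block.
   Hence a fixed block misses the optimal region in all mu individuals with
   probability (1 - p)^mu <= exp (- mu p) = exp (- c m), where p is the
   probability of the optimal region, and a union bound over the m blocks
   gives the failure probability m exp (- c m). *)

Lemma leq_card_bigcup (T I : finType) (F : I -> {set T}) :
  (#|\bigcup_i F i| <= \sum_i #|F i|)%N.
Proof.
elim/big_rec2: _ => [|i U s _ le_Us]; first by rewrite cards0.
exact: leq_trans (leq_card_setU _ _) (leq_add _ le_Us).
Qed.

Section BalancedMap.
Variables (T U : finType) (f : T -> U) (n : nat).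
Hypothesis card_fiber : forall y, #|[set x | f x == y]| = n.

Lemma card_preim_balanced (Y : {set U}) : #|[set x | f x \in Y]| = (#|Y| * n)%N.
Proof.
rewrite -sum1_card (partition_big f (mem Y)) /=; last by move=> x; rewrite inE.
rewrite -sum_nat_const; apply: eq_bigr => y Yy; rewrite -(card_fiber y) -sum1_card.
by apply: eq_bigl => x; rewrite !inE andb_idl // => /eqP ->.
Qed.

Lemma card_balanced_dom : #|T| = (#|U| * n)%N.
Proof.
by rewrite -[#|U|]cardsT -card_preim_balanced; apply: eq_card => x; rewrite !inE.
Qed.

Lemma unif_prob_preim_balanced (R : realType) (Y : {set U}) :
  (0 < n)%N -> unif_prob R [set x | f x \in Y] = unif_prob R Y.
Proof.
move=> n_gt0; rewrite /unif_prob card_preim_balanced card_balanced_dom !natrM.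
by rewrite invfM mulrACA divff ?mulr1 // pnatr_eq0 -lt0n.
Qed.

End BalancedMap.

Section Blocks.
Variables (m k : nat) (i : 'I_m).

Lemma block_index_lt (j : 'I_k) : (i * k + j < m * k)%N.
Proof.
apply: (@leq_trans (i.+1 * k)); first by rewrite mulSn addnC ltn_add2r.
by rewrite leq_mul2r ltn_ord orbT.
Qed.

(* Past block [i], [nth false (fgraph d)] reads out of range and yields [false]. *)
Definition xor_block (d : {ffun 'I_k -> bool}) (x : (m * k).-tuple bool) :
    (m * k).-tuple bool :=
  [tuple nth false x n (+) ((i * k <= n)%N && nth false (fgraph d) (n - i * k))
   | n < m * k].

Lemma nth_xor_block d x n : (n < m * k)%N ->
  nth false (xor_block d x) n =
    nth false x n (+) ((i * k <= n)%N && nth false (fgraph d) (n - i * k)).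
Proof. by move=> n_lt; rewrite -[n]/(nat_of_ord (Ordinal n_lt)) nth_mktuple. Qed.

Lemma xor_blockK d : involutive (xor_block d).
Proof.
move=> x; apply: val_inj; apply: (@eq_from_nth _ false); rewrite ?size_tuple //.
by move=> n n_lt; rewrite !nth_xor_block // addbK.
Qed.

Lemma block_xor_block d x : block (xor_block d x) i = [ffun j => block x i j (+) d j].
Proof.
apply/ffunP => j; rewrite !ffunE nth_xor_block ?block_index_lt //.
by rewrite leq_addr addKn nth_fgraph_ord.
Qed.

Lemma card_block_fiber (y y' : {ffun 'I_k -> bool}) :
  #|[set x | block x i == y]| = #|[set x | block x i == y']|.
Proof.
wlog suff: y y' / (#|[set x | block x i == y]| <= #|[set x | block x i == y']|)%N.
  by move=> le_fiber; apply/eqP; rewrite eqn_leq !le_fiber.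
pose d := [ffun j => y j (+) y' j].
rewrite -(card_imset _ (can_inj (xor_blockK d))); apply: subset_leq_card.
apply/subsetP => _ /imsetP[x + ->]; rewrite !inE => /eqP block_x.
by rewrite block_xor_block; apply/eqP/ffunP => j; rewrite !ffunE -block_x /d ffunE addKb.
Qed.

Lemma unif_prob_block (R : realType) (Y : {set {ffun 'I_k -> bool}}) :
  unif_prob R [set x : (m * k).-tuple bool | block x i \in Y] = unif_prob R Y.
Proof.
pose x0 := [tuple of nseq (m * k) false].
apply: (unif_prob_preim_balanced (n := #|[set x | block x i == block x0 i]|)).
  by move=> y; apply: card_block_fiber.
by apply/card_gt0P; exists x0; rewrite inE.
Qed.

End Blocks.

Section UniformProbability.
Variables (R : realType) (T : finType).
Local Notation P := (unif_prob R).

Lemma unif_prob_le1 (E : {set T}) : P E <= 1.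
Proof.
rewrite /unif_prob; have [->|T_gt0] := posnP #|T|; first by rewrite invr0 mulr0.
by rewrite ler_pdivrMr ?ltr0n // mul1r ler_nat max_card.
Qed.

Lemma le_unif_prob (E F : {set T}) : E \subset F -> P E <= P F.
Proof.
by move=> sEF; rewrite ler_wpM2r ?invr_ge0 ?ler0n // ler_nat subset_leq_card.
Qed.

Lemma unif_probC (E : {set T}) : (0 < #|T|)%N -> P (~: E) = 1 - P E.
Proof.
move=> T_gt0; rewrite /unif_prob cardsCs setCK natrB ?max_card // mulrBl.
by rewrite divff // pnatr_eq0 -lt0n.
Qed.

Lemma unif_prob_bigcup_le (I : finType) (F : I -> {set T}) :
  P (\bigcup_i F i) <= \sum_i P (F i).
Proof.
rewrite -mulr_suml -natr_sum ler_wpM2r ?invr_ge0 ?ler0n // ler_nat.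
exact: leq_card_bigcup.
Qed.

Lemma unif_prob_ffun_on (I : finType) (B : {set T}) :
  unif_prob R [set g : {ffun I -> T} | g \in ffun_on B] = P B ^+ #|I|.
Proof.
rewrite /unif_prob card_ffun expr_div_n -!natrX -card_ffun_on.
by congr (_%:R / _); apply: eq_card => g; rewrite inE.
Qed.

End UniformProbability.

Lemma expr1B_le_expRN (R : realType) (x : R) (n : nat) :
  x <= 1 -> (1 - x) ^+ n <= expR (- (n%:R * x)).
Proof.
move=> x_le1; rewrite -mulrN expRM_natl.
by rewrite lerXn2r ?nnegrE ?subr_ge0 ?expR_ge0 // expR_ge1Dx.
Qed.

Theorem lemma7p1 (R : realType) (m k : nat) (a b c : R) (z mu : nat) :
  (1 <= m)%N -> (1 <= k)%N -> 0 < a -> 0 < b -> (0 < z)%N -> (z < k)%N ->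
  0 < c -> 0 < p_star a b z k ->
  mu%:R = c / p_star a b z k * m%:R ->
  1 - m%:R * expR (- (c * m%:R)) <=
    unif_prob R (all_blocks_covered a b z mu m k).
Proof.
move=> _ _ _ _ _ _ _ p_gt0 mu_def.
set A := all_blocks_covered a b z mu m k.
set X := opt_region a b z k; set p := p_star a b z k.
pose miss (i : 'I_m) :=
  [set Q : population mu m k | Q \in ffun_on [set x | block x i \in ~: X]].
have pop_gt0 : (0 < #|population mu m k|)%N.
  by apply/card_gt0P; exists [ffun=> [tuple of nseq (m * k) false]].
have uncovered : ~: A \subset \bigcup_i miss i.
  apply/subsetP => Q; rewrite !inE => /forallPn[i /existsPn Q_miss].
  apply/bigcupP; exists i => //; rewrite inE; apply/ffun_onP => q.
  by rewrite inE in_setC Q_miss.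
have miss_prob i : unif_prob R (miss i) = (1 - p) ^+ mu.
  rewrite unif_prob_ffun_on unif_prob_block unif_probC ?card_ord //.
  by apply/card_gt0P; exists [ffun=> false].
have mu_p : mu%:R * p = c * m%:R by rewrite mu_def mulrAC divfK ?gt_eqF.
rewrite -[A]setCK unif_probC // lerD2l lerN2.
apply: le_trans (le_unif_prob R uncovered) _.
apply: le_trans (unif_prob_bigcup_le R miss) _.
apply: (@le_trans _ _ (\sum_(i < m) expR (- (c * m%:R)))).
  apply: ler_sum => i _.
  by rewrite miss_prob -mu_p; apply: expr1B_le_expRN; apply: unif_prob_le1.
by rewrite sumr_const card_ord mulr_natl.
Qed.
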